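(* Let $E$ be a real Hilbert space with $\dim(E)\ge2$, $h\in E$ a unit vector, $f:\mathbb{R}_{\ge0}\to\mathbb{R}_{\ge0}$, and $C_f=\{x\in E\mid f(\|x_\perp\|)\le x_h\}$. Then $(E,\preceq_f)$, where $x\preceq_f y\iff y-x\in C_f$, is an oriented (additive) group if and only if $f(0)=0$ and $f(d)>0$ for all $d>0$.
   Context: For $x\in E$ write $x=x_h h+x_\perp$ with $x_h=(x,h)$ and $x_\perp$ orthogonal to $h$. An orientation is a reflexive, antisymmetric binary relation. An oriented additive group is an abelian group with an orientation $\preceq$ such that $x\preceq y$ implies $x+z\preceq y+z$ for all $x,y,z$. *)

From mathcomp Require Import all_boot all_order all_algebra.
From mathcomp Require Import reals.
Set Implicit Arguments. Unset Strict Implicit. Unset Printing Implicit Defensive.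
Import Order.TTheory GRing.Theory Num.Theory.
Local Open Scope ring_scope.

Section Hilbert.
Variables (R : realType) (E : lmodType R) (ip : E -> E -> R).

Definition is_inner_product : Prop :=
  [/\ (forall x y, ip x y = ip y x),
      (forall x y z, ip (x + y) z = ip x z + ip y z),
      (forall (a : R) x y, ip (a *: x) y = a * ip x y),
      (forall x, 0 <= ip x x) &
      (forall x, ip x x = 0 -> x = 0)].

Definition ipnorm (x : E) : R := Num.sqrt (ip x x).

Definition ip_cauchy (u : nat -> E) : Prop :=
  forall e : R, 0 < e -> exists N : nat, forall m n : nat,
    (N <= m)%N -> (N <= n)%N -> ipnorm (u m - u n) < e.

Definition ip_converges (u : nat -> E) (l : E) : Prop :=
  forall e : R, 0 < e -> exists N : nat, forall n : nat,
    (N <= n)%N -> ipnorm (u n - l) < e.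

Definition is_hilbert : Prop :=
  is_inner_product /\
  forall u : nat -> E, ip_cauchy u -> exists l, ip_converges u l.

Definition dim_ge2 : Prop :=
  exists u v : E, forall a b : R, a *: u + b *: v = 0 -> a = 0 /\ b = 0.

Definition comp_h (h x : E) : R := ip x h.
Definition perp_h (h x : E) : E := x - comp_h h x *: h.

Definition Cf (h : E) (f : R -> R) (x : E) : Prop :=
  f (ipnorm (perp_h h x)) <= comp_h h x.

Definition prec_f (h : E) (f : R -> R) (x y : E) : Prop := Cf h f (y - x).
End Hilbert.

Definition is_orientation (T : Type) (le : T -> T -> Prop) : Prop :=
  (forall x, le x x) /\ (forall x y, le x y -> le y x -> x = y).

Definition oriented_group (G : zmodType) (le : G -> G -> Prop) : Prop :=
  is_orientation le /\ (forall x y z : G, le x y -> le (x + z) (y + z)).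

(* Since [x <= y] means [y - x \in C_f], translation invariance is automatic,
   reflexivity means [0 \in C_f], i.e. [f 0 = 0], and antisymmetry means that
   [C_f] and [- C_f] meet only at [0].  As [f >= 0], a vector [x] lies in both
   cones exactly when [x_h = 0] and [f (|x_perp|) = 0].  If [f] vanishes only
   at [0], this forces [x_perp = 0], hence [x = 0]; conversely, if [f d = 0]
   for some [d > 0], any vector of norm [d] orthogonal to [h] (which exists as
   [dim E >= 2]) lies in both cones. *)
From mathcomp Require Import all_boot all_order all_algebra.
From mathcomp Require Import reals.
From mathcomp Require Import lra.
Import Order.TTheory GRing.Theory Num.Theory.
Local Open Scope ring_scope.

Set Implicit Arguments.
Unset Strict Implicit.

Lemma oriented_group_subE (G : zmodType) (C : G -> Prop) :
  oriented_group (fun x y => C (y - x)) <->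
  C 0 /\ (forall x, C x -> C (- x) -> x = 0).
Proof.
split=> [[[refl anti] _] | [C0 anti]].
  split=> [|x Cx CNx]; first by have := refl 0; rewrite subrr.
  by apply: anti; rewrite ?sub0r ?subr0.
split=> [|x y z]; last by rewrite opprD addrA addrAC addrK.
split=> [x | x y Cyx Cxy]; first by rewrite subrr.
by apply/eqP; rewrite eq_sym -subr_eq0; apply/eqP/anti; rewrite // opprB.
Qed.

Lemma dim_ge2_not_line (R : realType) (E : lmodType R) (h : E) (c : E -> R) :
  dim_ge2 E -> exists w : E, w != c w *: h.
Proof.
case=> u [v indep]; have [ua | ] := eqVneq u (c u *: h); last by exists u.
have [vb | ] := eqVneq v (c v *: h); last by exists v.
have [_ /eqP] : c v = 0 /\ - c u = 0.
  apply: indep; move: (c u) (c v) ua vb => a b -> ->.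
  by rewrite !scalerA mulrC mulNr scaleNr subrr.
rewrite oppr_eq0 => /eqP cu0.
have [] := indep 1 0; last by move/eqP; rewrite oner_eq0.
by rewrite ua cu0 !scale0r scaler0 addr0.
Qed.

Section InnerProduct.
Variables (R : realType) (E : lmodType R) (ip : E -> E -> R).
Hypothesis ip_inner : is_inner_product ip.

Lemma ipC x y : ip x y = ip y x.
Proof. by case: ip_inner. Qed.

Lemma ipDl x y z : ip (x + y) z = ip x z + ip y z.
Proof. by case: ip_inner. Qed.

Lemma ipZl a x y : ip (a *: x) y = a * ip x y.
Proof. by case: ip_inner. Qed.

Lemma ipZr a x y : ip x (a *: y) = a * ip x y.
Proof. by rewrite ipC ipZl ipC. Qed.

Lemma ipNl x y : ip (- x) y = - ip x y.
Proof. by rewrite -scaleN1r ipZl mulN1r. Qed.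

Lemma ipNr x y : ip x (- y) = - ip x y.
Proof. by rewrite ipC ipNl ipC. Qed.

Lemma ipBl x y z : ip (x - y) z = ip x z - ip y z.
Proof. by rewrite ipDl ipNl. Qed.

Lemma ip0l y : ip 0 y = 0.
Proof. by rewrite -(scale0r 0) ipZl mul0r. Qed.

Lemma ipnorm_sqr x : ipnorm ip x ^+ 2 = ip x x.
Proof. by rewrite sqr_sqrtr //; case: ip_inner. Qed.

Lemma ipnorm_ge0 x : 0 <= ipnorm ip x.
Proof. exact: sqrtr_ge0. Qed.

Lemma ipnorm0 : ipnorm ip 0 = 0.
Proof. by rewrite /ipnorm ip0l sqrtr0. Qed.

Lemma ipnormN x : ipnorm ip (- x) = ipnorm ip x.
Proof. by rewrite /ipnorm ipNl ipNr opprK. Qed.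

Lemma ipnormZ a x : ipnorm ip (a *: x) = `|a| * ipnorm ip x.
Proof.
by rewrite /ipnorm ipZl ipZr mulrA -expr2 sqrtrM ?sqrtr_sqr // sqr_ge0.
Qed.

Lemma ipnorm_eq0 x : (ipnorm ip x == 0) = (x == 0).
Proof.
apply/eqP/eqP=> [x0 | ->]; last exact: ipnorm0.
by case: ip_inner => _ _ _ _; apply; rewrite -ipnorm_sqr x0 expr0n.
Qed.

Lemma ipnorm_gt0 x : (0 < ipnorm ip x) = (x != 0).
Proof. by rewrite lt_def ipnorm_eq0 ipnorm_ge0 andbT. Qed.

Section Projection.
Variable h : E.

Lemma comp_hZ a x : comp_h ip h (a *: x) = a * comp_h ip h x.
Proof. exact: ipZl. Qed.

Lemma comp_hN x : comp_h ip h (- x) = - comp_h ip h x.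
Proof. exact: ipNl. Qed.

Lemma perp_hN x : perp_h ip h (- x) = - perp_h ip h x.
Proof. by rewrite /perp_h comp_hN scaleNr opprD. Qed.

Lemma perp_h_id x : comp_h ip h x = 0 -> perp_h ip h x = x.
Proof. by rewrite /perp_h => ->; rewrite scale0r subr0. Qed.

Lemma perp_h_eq0 x : comp_h ip h x = 0 -> perp_h ip h x = 0 -> x = 0.
Proof. by move=> /perp_h_id ->. Qed.

Section Cone.
Variable f : R -> R.
Hypothesis f_ge0 : forall d, 0 <= d -> 0 <= f d.

Lemma Cf0 : Cf ip h f 0 <-> f 0 = 0.
Proof.
rewrite /Cf /comp_h ip0l perp_h_id ?ipnorm0; last exact: ip0l.
by split=> [f0 | ->]; [apply/eqP; rewrite eq_le f0 f_ge0 | ].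
Qed.

Lemma Cf_antipodal x :
  Cf ip h f x /\ Cf ip h f (- x) <->
  f (ipnorm ip (perp_h ip h x)) = 0 /\ comp_h ip h x = 0.
Proof.
rewrite /Cf comp_hN perp_hN ipnormN.
have := f_ge0 (ipnorm_ge0 (perp_h ip h x)).
set a := f _; set c := comp_h _ _ _ => a_ge0.
by split=> [[ac aNc] | [-> ->]]; [split; lra | rewrite oppr0].
Qed.

End Cone.

Hypothesis h_unit : ip h h = 1.

Lemma comp_h_perp x : comp_h ip h (perp_h ip h x) = 0.
Proof. by rewrite /comp_h ipBl ipZl h_unit mulr1 subrr. Qed.

Lemma exists_orthogonal_of_norm (d : R) : dim_ge2 E -> 0 <= d ->
  exists x, comp_h ip h x = 0 /\ ipnorm ip x = d.
Proof.
move=> /(dim_ge2_not_line h (comp_h ip h)) [w not_line] d_ge0.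
have p_gt0 : 0 < ipnorm ip (perp_h ip h w) by rewrite ipnorm_gt0 subr_eq0.
exists ((d / ipnorm ip (perp_h ip h w)) *: perp_h ip h w); split.
  by rewrite comp_hZ comp_h_perp mulr0.
by rewrite ipnormZ ger0_norm ?divfK ?gt_eqF // divr_ge0 // ltW.
Qed.

End Projection.
End InnerProduct.

Unset Implicit Arguments.

Theorem mainTheorem13 (R : realType) (E : lmodType R) (ip : E -> E -> R)
  (HE : is_hilbert ip) (Hdim : dim_ge2 E) (h : E) (Hh : ipnorm ip h = 1)
  (f : R -> R) (Hf : forall d : R, 0 <= d -> 0 <= f d) :
  oriented_group (prec_f ip h f) <->
  (f 0 = 0 /\ forall d : R, 0 < d -> 0 < f d).
Proof.
have [ip_inner _] := HE.
have h_unit : ip h h = 1 by rewrite -ipnorm_sqr // Hh expr1n.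
rewrite /prec_f oriented_group_subE (Cf0 ip_inner h Hf).
split=> [[f0 anti] | [f0 f_pos]]; split=> //.
- move=> d d_gt0.
  have [x [cx nx]] := exists_orthogonal_of_norm ip_inner h_unit Hdim (ltW d_gt0).
  rewrite lt_def Hf ?ltW // andbT; apply: contraTneq d_gt0 => fd0.
  suff x0 : x = 0 by rewrite -nx x0 ipnorm0 // ltxx.
  have [Cx CNx] : Cf ip h f x /\ Cf ip h f (- x).
    by apply/(Cf_antipodal ip_inner h Hf); rewrite perp_h_id // nx.
  exact: anti.
- move=> x Cx CNx.
  have [fp0 cx] := proj1 (Cf_antipodal ip_inner h Hf x) (conj Cx CNx).
  apply: (perp_h_eq0 cx); apply/eqP/contraT => p_neq0.
  have := f_pos (ipnorm ip (perp_h ip h x)).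
  by rewrite fp0 ltxx ipnorm_gt0 // p_neq0; apply.
Qed.
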